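(* Let $\Gamma,\Delta$ be finitely generated groups acting continuously on compact metric spaces $Y$ and $X$ respectively, where $Y$ is connected, the action $\Gamma\curvearrowright Y$ has at least one free orbit, and the action $\Delta\curvearrowright X$ is free. Let $f:Y\to X$ be a continuous map inducing a quasi-isometry of warped cones, i.e. there are an index set $I$, maps $I\ni i\mapsto t_i\in(0,\infty)$ and $I\ni i\mapsto \tau_i\in(0,\infty)$ that are both surjective onto $(0,\infty)$, and constants $C\ge1$, $A\ge0$ such that for every $i\in I$ the map $f:(t_iY,d_\Gamma)\to(\tau_iX,d_\Delta)$ satisfies $C^{-1}d_\Gamma(y,y')-A\le d_\Delta(f(y),f(y'))\le Cd_\Gamma(y,y')+A$ for all $y,y'$ and the $A$-neighbourhood of $f(Y)$ in $(\tau_iX,d_\Delta)$ is all of $\tau_iX$. Let $\Delta'=\{\delta\in\Delta:\delta\,\mathrm{im}(f)=\mathrm{im}(f)\}$. Then: (1) $\Delta'$ has finite index in $\Delta$ and there is a short exact sequence $1\to F\to\Gamma\to\Delta'\to1$ with $F$ finite; (2) there is a homeomorphism $h:\mathrm{im}(f)\to Y/F$ such that the quotient map $q:Y\to Y/F$ equals $h\circ f$, and $h$ conjugates the actions $\Delta'\curvearrowright\mathrm{im}(f)$ and $\Gamma/F\curvearrowright Y/F$; (3) $\mathrm{im}(f)$ is one of $[\Delta:\Delta']$ many connected components of $X$, and $\Delta$ acts transitively on them. In particular, if $f$ is a homeomorphism, then $\Gamma$ and $\Delta$ are isomorphic and the actions are conjugate by $f$.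
   Context: $S$ is a fixed finite symmetric generating set of the group, $|\gamma|$ the word length. For a compact metric space $(Y,d)$ with an action of $\Gamma=\langle S\rangle$ and $t>0$, $tY$ denotes $Y$ with metric $td$ and $d_\Gamma$ is the largest metric on $tY$ with $d_\Gamma(y,y')\le t\,d(y,y')$ and $d_\Gamma(y,sy)\le1$ for all $y,y'\in Y$, $s\in S$ (the warped metric). A free orbit is an orbit $\Gamma y$ with trivial stabiliser of $y$. *)

From Stdlib Require List.
From HB Require Import structures.
From mathcomp Require Import all_boot all_order all_algebra.
From mathcomp Require Import boolp classical_sets reals.

Set Implicit Arguments.
Unset Strict Implicit.
Unset Printing Implicit Defensive.

Import Order.TTheory GRing.Theory Num.Theory.
Local Open Scope classical_set_scope.
Local Open Scope ring_scope.

Section Defs.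
Variable R : realType.

Definition is_metric (T : Type) (d : T -> T -> R) : Prop :=
  (forall x y, 0 <= d x y) /\
  (forall x y, d x y = 0 <-> x = y) /\
  (forall x y, d x y = d y x) /\
  (forall x y z, d x z <= d x y + d y z).

Definition mopen (T : Type) (d : T -> T -> R) (U : set T) : Prop :=
  forall x, U x -> exists e : R, 0 < e /\ forall y, d x y < e -> U y.

Definition mcontinuous (T U : Type) (dT : T -> T -> R) (dU : U -> U -> R)
  (f : T -> U) : Prop :=
  forall x (e : R), 0 < e -> exists del : R, 0 < del /\
    forall x', dT x x' < del -> dU (f x) (f x') < e.

Definition mcompact (T : Type) (d : T -> T -> R) : Prop :=
  forall (I : Type) (U : I -> set T),
    (forall i, mopen d (U i)) -> (forall x, exists i, U i x) ->
    exists l : list I, forall x, exists i, List.In i l /\ U i x.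

Definition mconnected_set (T : Type) (d : T -> T -> R) (A : set T) : Prop :=
  ~ (exists U V : set T, mopen d U /\ mopen d V /\
       (forall x, A x -> U x \/ V x) /\
       (exists x, A x /\ U x) /\ (exists x, A x /\ V x) /\
       (forall x, A x -> U x -> V x -> False)).

Definition mconnected (T : Type) (d : T -> T -> R) : Prop :=
  mconnected_set d setT.

Definition mcomponent (T : Type) (d : T -> T -> R) (C : set T) : Prop :=
  (exists x, C x) /\ mconnected_set d C /\
  (forall C', mconnected_set d C' -> C `<=` C' -> C' = C).

Definition mhomeomorphism (T U : Type) (dT : T -> T -> R) (dU : U -> U -> R)
  (f : T -> U) : Prop :=
  exists g : U -> T, cancel f g /\ cancel g f /\
    mcontinuous dT dU f /\ mcontinuous dU dT g.

Definition warp_admissible (G : groupType) (T : Type) (act : G -> T -> T)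
  (S : seq G) (d : T -> T -> R) (t : R) (D : T -> T -> R) : Prop :=
  is_metric D /\ (forall y y', D y y' <= t * d y y') /\
  (forall y s, s \in S -> D y (act s y) <= 1).

(* d_Gamma on tY : the largest admissible metric, i.e. the pointwise
   supremum of the admissible metrics *)
Definition warped_dist (G : groupType) (T : Type) (act : G -> T -> T)
  (S : seq G) (d : T -> T -> R) (t : R) (y y' : T) : R :=
  sup [set r : R | exists D, warp_admissible act S d t D /\ r = D y y'].

End Defs.

Definition is_action (G : groupType) (T : Type) (act : G -> T -> T) : Prop :=
  (forall x, act 1%g x = x) /\
  (forall g h x, act (g * h)%g x = act g (act h x)).

Definition free_orbit_at (G : groupType) (T : Type) (act : G -> T -> T)
  (y : T) : Prop := forall g, act g y = y -> g = 1%g.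

Definition free_action (G : groupType) (T : Type) (act : G -> T -> T) : Prop :=
  forall y, free_orbit_at act y.

Definition sym_gen_set (G : groupType) (S : seq G) : Prop :=
  (forall s, s \in S -> (s^-1)%g \in S) /\
  (forall g : G, exists l : seq G, all (fun s => s \in S) l /\
      g = foldr (fun a b => (a * b)%g) 1%g l).

Definition group_hom (G H : groupType) (phi : G -> H) : Prop :=
  forall g h, phi (g * h)%g = (phi g * phi h)%g.

Definition has_card (T : Type) (A : set T) (n : nat) : Prop :=
  exists e : 'I_n -> T, injective e /\ range e = A.

Definition left_cosets (G : groupType) (H : set G) : set (set G) :=
  [set [set (g * h)%g | h in H] | g in setT].

(* orbit space of the restriction of act to F: points are F-orbits *)
Definition orbit_space (G : groupType) (T : Type) (act : G -> T -> T)
  (F : set G) : Type :=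
  {S : set T | exists y, S = [set act g y | g in F]}.

Definition orbit_proj (G : groupType) (T : Type) (act : G -> T -> T)
  (F : set G) (y : T) : orbit_space act F :=
  exist _ [set act g y | g in F] (ex_intro _ y erefl).

Definition quotient_open (T Q : Type) (openT : set T -> Prop) (q : T -> Q)
  (V : set Q) : Prop := openT (q @^-1` V).

Definition subspace_open (T : Type) (openT : set T -> Prop) (P : set T)
  (V : set {x : T | P x}) : Prop :=
  exists U, openT U /\ forall z : {x : T | P x}, V z <-> U (proj1_sig z).

Definition homeomorphism (A B : Type) (openA : set A -> Prop)
  (openB : set B -> Prop) (h : A -> B) : Prop :=
  bijective h /\ (forall V, openB V -> openA (h @^-1` V)) /\
  (forall U, openA U -> openB (h @` U)).

Arguments subspace_open {T} openT P V.
Arguments orbit_space {G T} act F.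
Arguments orbit_proj {G T} act F y.
Arguments quotient_open {T Q} openT q V.
Arguments homeomorphism {A B} openA openB h.
Arguments warped_dist {R G T} act S d t y y'.
Arguments left_cosets {G} H _.
Arguments has_card {T} A n.

From mathcomp Require Import all_boot all_order all_algebra.
From mathcomp Require Import boolp classical_sets reals.
From mathcomp Require Import lra.

Set Implicit Arguments.
Unset Strict Implicit.
Unset Printing Implicit Defensive.

Import Order.TTheory GRing.Theory Num.Theory.
Local Open Scope classical_set_scope.
Local Open Scope ring_scope.

(* As the scale t grows, the warped metric on tY only sees the action: if a
   closed set stays within warped distance K of y at every scale, then a word
   of length about K in the generators moves y into it.  Since f is a coarse
   equivalence at all scales with the same constants, for each generator s of
   Gamma we get f (s y) = delta f(y) with delta in a finite list; the sets of
   y on which a given delta works are closed and disjoint, so by connectedness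
   of Y a single delta = phi(s) works everywhere, and freeness of the
   Delta-action makes phi a homomorphism.  The same word bound shows that f
   identifies exactly the orbits of the finite kernel of phi, and that X is
   covered by finitely many Delta-translates of the compact connected set
   im f.  These translates are clopen, hence they are the components of X,
   permuted transitively by Delta and indexed by the cosets of phi(Gamma), the
   stabiliser of im f. *)

(** * Metric topology *)

Section MetricTopology.
Variable R : realType.

Definition mclosed T (d : T -> T -> R) (Z : set T) : Prop :=
  forall p, ~ Z p -> exists e : R, 0 < e /\ forall z, d p z < e -> ~ Z z.

Lemma mdist_gt0 T (d : T -> T -> R) x y : is_metric d -> x <> y -> 0 < d x y.
Proof.
by move=> [d0 [deq _]] nxy; rewrite lt_neqAle d0 andbT eq_sym; apply/eqP => /deq.
Qed.

Lemma list_common_radius (I : Type) (l : list I) (Q : I -> R -> Prop) :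
  (forall i e e', 0 < e' -> e' <= e -> Q i e -> Q i e') ->
  (forall i, List.In i l -> exists e, 0 < e /\ Q i e) ->
  exists e : R, 0 < e /\ forall i, List.In i l -> Q i e.
Proof.
move=> Qmon; elim: l => [|a l IH] H; first by exists 1; split => // i [].
have [e [e0 He]] := IH (fun i il => H i (or_intror il)).
have [ea [ea0 Qa]] := H a (or_introl erefl).
have m0 : 0 < Num.min e ea by rewrite lt_min e0.
exists (Num.min e ea); split => // i [<-|il].
  by apply: (Qmon _ ea) => //; rewrite ge_min lexx orbT.
by apply: (Qmon _ e) => //; [rewrite ge_min lexx | exact: He].
Qed.

Lemma mopenC T (d : T -> T -> R) Z : mclosed d Z -> mopen d (~` Z).
Proof. by move=> cZ p /cZ [e [e0 He]]; exists e; split => // z /He. Qed.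

Lemma mclosedC T (d : T -> T -> R) U : mopen d U -> mclosed d (~` U).
Proof.
by move=> oU p /contrapT /oU [e [e0 He]]; exists e; split => // z /He Uz /(_ Uz).
Qed.

Lemma mclosed_set1 T (d : T -> T -> R) y : is_metric d -> mclosed d [set y].
Proof.
move=> hd p np; exists (d p y); split; first exact: mdist_gt0.
by move=> z + /= E; rewrite E ltxx.
Qed.

Lemma mcontinuous_comp T U W (dT : T -> T -> R) (dU : U -> U -> R)
    (dW : W -> W -> R) f g :
  mcontinuous dT dU f -> mcontinuous dU dW g -> mcontinuous dT dW (g \o f).
Proof.
move=> hf hg x e e0; have [d1 [d10 H1]] := hg (f x) e e0.
have [d2 [d20 H2]] := hf x d1 d10.
by exists d2; split => // y /H2 /H1.
Qed.

Lemma mopen_preimage T U (dT : T -> T -> R) (dU : U -> U -> R) f V :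
  mcontinuous dT dU f -> mopen dU V -> mopen dT (f @^-1` V).
Proof.
move=> hf hV x Vx; have [e [e0 He]] := hV _ Vx.
have [del [del0 Hd]] := hf x e e0.
by exists del; split => // y /Hd /He.
Qed.

Lemma mclosed_preimage T U (dT : T -> T -> R) (dU : U -> U -> R) f Z :
  mcontinuous dT dU f -> mclosed dU Z -> mclosed dT (f @^-1` Z).
Proof.
move=> hf cZ; have := mclosedC (mopen_preimage hf (mopenC cZ)).
by rewrite preimage_setC setCK.
Qed.

(* Near each point [y] of [K] the distance from [p] to [f] stays above half
   its value at [y]; with [~` K] these neighbourhoods cover the compact [T],
   and a finite subcover gives a uniform gap. *)
Lemma mclosed_image T U (dT : T -> T -> R) (dU : U -> U -> R) f K :
  is_metric dU -> mcompact dT -> mcontinuous dT dU f -> mclosed dT K ->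
  mclosed dU (f @` K).
Proof.
move=> hdU hc hf hK p npK; have [_ [_ [dsym dtr]]] := hdU.
have dpos y : K y -> 0 < dU p (f y).
  by move=> Ky; apply: mdist_gt0 => // E; apply: npK; exists y.
pose UU y : set T :=
  if pselect (K y) then [set y' | dU p (f y) / 2 < dU p (f y')] else ~` K.
have UUo y : mopen dT (UU y).
  rewrite /UU; case: pselect => Ky; last exact: mopenC.
  move=> y' Hy'; set r := dU p (f y') - dU p (f y) / 2.
  have r0 : 0 < r by rewrite subr_gt0.
  have [del [del0 Hd]] := hf y' r r0.
  exists del; split => // z /Hd hz /=.
  have := dtr p (f z) (f y'); rewrite (dsym (f z)) /r in hz *; lra.
have UUcov y : exists i, UU i y.
  exists y; rewrite /UU; case: pselect => Ky //=.
  by rewrite ltr_pdivrMr // ltr_pMr ?ltr1n ?dpos.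
have [l Hl] := hc _ UU UUo UUcov.
have [e [e0 He]] : exists e : R,
    0 < e /\ forall y, List.In y l -> K y -> e <= dU p (f y) / 2.
  apply: list_common_radius => [y e e' _ le h /h|y _]; first exact: le_trans.
  have [Ky|nKy] := pselect (K y); last by exists 1.
  by exists (dU p (f y) / 2); split => //; rewrite divr_gt0 ?dpos.
exists e; split => // z hz [y Ky fyz].
have [i [il]] := Hl y; rewrite /UU; case: pselect => Ki //= Ui.
have := lt_le_trans hz (le_trans (He i il Ki) (ltW Ui)).
by rewrite fyz ltxx.
Qed.

Lemma mclosed_eq T U (dT : T -> T -> R) (dU : U -> U -> R) (f g : T -> U) :
  is_metric dU -> mcontinuous dT dU f -> mcontinuous dT dU g ->
  mclosed dT [set z | f z = g z].
Proof.
move=> hdU cf cg p np; have [_ [_ [dsym tr]]] := hdU.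
set r := dU (f p) (g p).
have r20 : 0 < r / 2 by rewrite divr_gt0 // mdist_gt0.
have [e1 [e10 H1]] := cf p _ r20; have [e2 [e20 H2]] := cg p _ r20.
exists (Num.min e1 e2); split; first by rewrite lt_min e10.
move=> z; rewrite lt_min => /andP [/H1 h1 /H2 h2] /= E; rewrite E in h1.
have := tr (f p) (g z) (g p); rewrite (dsym (g z)) -/r; lra.
Qed.

Lemma mconnected_clopen T (d : T -> T -> R) A Z :
  mconnected_set d A -> mopen d Z -> mclosed d Z ->
  (exists x, A x /\ Z x) -> A `<=` Z.
Proof.
move=> hA oZ cZ [x0 [Ax0 Zx0]] x Ax; apply: contrapT => nZx.
apply: hA; exists Z, (~` Z); split => //; split; first exact: mopenC.
split; first by move=> y _; case: (pselect (Z y)); [left|right].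
split; first by exists x0.
by split; [exists x | move=> y _ Zy /(_ Zy)].
Qed.

Lemma mconnected_image T U (dT : T -> T -> R) (dU : U -> U -> R) f A :
  mconnected_set dT A -> mcontinuous dT dU f -> mconnected_set dU (f @` A).
Proof.
move=> hA hf [V [W [oV [oW [cov [Vne [Wne dis]]]]]]].
case: Vne => _ [[y Ay <-] Vy]; case: Wne => _ [[y' Ay' <-] Wy'].
apply: hA; exists (f @^-1` V), (f @^-1` W).
split; first exact: mopen_preimage hf oV.
split; first exact: mopen_preimage hf oW.
split; first by move=> z Az; apply: cov; exists z.
split; first by exists y.
split; first by exists y'.
by move=> z Az; apply: dis; exists z.
Qed.

(* Each point has a neighbourhood avoiding the finitely many pieces that do
   not contain it. *)
Lemma mopen_closed_partition T (I : Type) (d : T -> T -> R) (L : list I)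
    (Z : I -> set T) :
  (forall i, mclosed d (Z i)) -> (forall x, exists i, List.In i L /\ Z i x) ->
  (forall i j x, Z i x -> Z j x -> Z i = Z j) -> forall i, mopen d (Z i).
Proof.
move=> cZ cov ov i p Zp.
have [e [e0 He]] : exists e : R, 0 < e /\ forall j, List.In j L ->
    Z j <> Z i -> forall z, d p z < e -> ~ Z j z.
  apply: list_common_radius => [j e e' _ le h /h nZ z hz|j _].
    exact: nZ z (lt_le_trans hz le).
  have [->|nji] := pselect (Z j = Z i); first by exists 1.
  have [e [e0 He]] := cZ j p (fun Zjp => nji (ov j i p Zjp Zp)).
  by exists e.
exists e; split => // z hz.
have [j [jL Zjz]] := cov z.
have [E|NE] := pselect (Z j = Z i); first by rewrite -E.
by have := He j jL NE z hz.
Qed.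

End MetricTopology.

(** * The warped metric *)

Definition word_prod {G : groupType} (w : seq G) : G := foldr *%g 1%g w.

Lemma minr1_triangle (R : realDomainType) (a b c : R) :
  0 <= b -> 0 <= c -> a <= b + c ->
  Num.min a 1 <= Num.min b 1 + Num.min c 1.
Proof.
move=> b0 c0 abc.
have mb : 0 <= Num.min b 1 by rewrite le_min b0 ler01.
have mc : 0 <= Num.min c 1 by rewrite le_min c0 ler01.
have m1 : Num.min a 1 <= 1 by rewrite ge_min lexx orbT.
have [hb|hb] := leP 1 b.
  have : 1 <= Num.min b 1 by rewrite le_min hb lexx.
  lra.
have [hc|hc] := leP 1 c.
  have : 1 <= Num.min c 1 by rewrite le_min hc lexx.
  lra.
by rewrite ge_min abc.
Qed.

Section WarpedMetric.
Variables (R : realType) (G : groupType) (T : Type) (act : G -> T -> T).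
Variables (S : seq G) (d : T -> T -> R).
Hypothesis hd : is_metric d.

Lemma warp_admissible_min1 t : 0 < t ->
  warp_admissible act S d t (fun u v => Num.min (t * d u v) 1).
Proof.
move: hd => [d0 [deq [dsym dtr]]] t0.
have td0 u v : 0 <= t * d u v by rewrite mulr_ge0 ?d0 // ltW.
split; last by split => *; rewrite ge_min lexx ?orbT.
split; first by move=> u v; rewrite le_min ler01 td0.
split.
  move=> u v; split; last by move=> ->; rewrite (proj2 (deq v v)) // mulr0 min_l.
  rewrite /Num.min; case: ifP => _ /eqP; last by rewrite oner_eq0.
  by rewrite mulf_eq0 (gt_eqF t0) /= => /eqP /deq.
split; first by move=> u v; rewrite dsym.
by move=> u v w; apply: minr1_triangle; rewrite ?td0 // -mulrDr ler_pM2l.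
Qed.

Lemma warped_dist_ge D t y y' : warp_admissible act S d t D ->
  D y y' <= warped_dist act S d t y y'.
Proof.
move=> hD; apply: ub_le_sup; last by exists D.
by exists (t * d y y') => _ [D' [[_ [le _]] ->]].
Qed.

Lemma warped_dist_le t y y' b : 0 < t ->
  (forall D, warp_admissible act S d t D -> D y y' <= b) ->
  warped_dist act S d t y y' <= b.
Proof.
move=> t0 H; apply: ge_sup; last by move=> _ [D [hD ->]]; exact: H.
by exists (Num.min (t * d y y') 1), (fun u v => Num.min (t * d u v) 1);
  split => //; exact: warp_admissible_min1.
Qed.

Lemma warped_dist_refl t y : 0 < t -> warped_dist act S d t y y = 0.
Proof.
move=> t0; apply/eqP; rewrite eq_le; apply/andP; split.
  by apply: warped_dist_le => // D [[_ [deq _]] _]; rewrite (proj2 (deq y y)).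
apply: le_trans (warped_dist_ge y y (warp_admissible_min1 t0)).
by have [d0 _] := hd; rewrite le_min ler01 mulr_ge0 ?d0 // ltW.
Qed.

Lemma warped_dist_triangle t x y z : 0 < t ->
  warped_dist act S d t x z <=
    warped_dist act S d t x y + warped_dist act S d t y z.
Proof.
move=> t0; apply: warped_dist_le => // D hD.
have [[_ [_ [_ tr]]] _] := hD.
by apply: le_trans (tr x y z) _; apply: lerD; apply: warped_dist_ge.
Qed.

Lemma warped_dist_gen t y s : 0 < t -> s \in S ->
  warped_dist act S d t y (act s y) <= 1.
Proof. by move=> t0 sS; apply: warped_dist_le => // D [_ [_]]; apply. Qed.

Hypothesis hact : is_action act.

Lemma warped_dist_word t y w : 0 < t -> all (fun s => s \in S) w ->
  warped_dist act S d t y (act (word_prod w) y) <= (size w)%:R.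
Proof.
move=> t0; elim: w => [|a w IH] /=.
  by rewrite (proj1 hact) warped_dist_refl.
case/andP=> aS /IH wS; rewrite (proj2 hact) -addn1 natrD.
apply: le_trans (warped_dist_triangle _ (act (word_prod w) y) _ t0) _.
by rewrite lerD ?warped_dist_gen.
Qed.

Lemma warped_dist_act_bounded g : sym_gen_set S ->
  exists K : R, forall t x, 0 < t -> warped_dist act S d t x (act g x) <= K.
Proof.
case=> _ /(_ g) [w [wS ->]].
by exists (size w)%:R => t x t0; exact: warped_dist_word.
Qed.

End WarpedMetric.

(** * Orbits at bounded warped distance *)

Lemma mem_In (T : eqType) (x : T) s : x \in s -> List.In x s.
Proof.
by elim: s => //= a s IH; rewrite in_cons => /orP [/eqP ->|/IH]; auto.
Qed.

Lemma has_card_of_list (T : Type) (l : list T) (A : set T) :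
  (forall x, A x -> List.In x l) -> exists n, has_card A n.
Proof.
elim: l A => [|a l IH] A Al.
  exists 0%N, (fun i : 'I_0 => False_rect T (notF (ltn_ord i))).
  split; first by case.
  by apply/seteqP; split=> [x [[]]|x /Al].
have [n [e [inje rangee]]] : exists n, has_card (A `\ a) n.
  by apply: IH => x [/Al [->|//] /(_ erefl)].
have eA i : (A `\ a) (e i) by rewrite -rangee; exists i.
have [Aa|nAa] := pselect (A a); last first.
  exists n, e; split => //; rewrite rangee; apply/seteqP; split=> [x []//|x Ax].
  by split => // xa; apply: nAa; rewrite -xa.
pose e' i := if unlift ord_max i is Some j then e j else a.
exists n.+1, e'; split.
  rewrite /e' => i j; case: (unliftP ord_max i) => [i'|] ->;
    case: (unliftP ord_max j) => [j'|] -> //.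
  - by move=> /inje ->.
  - by move=> ea; case: (eA i') => _ /(_ ea).
  - by move=> ae; case: (eA j') => _ /(_ (esym ae)).
apply/seteqP; split=> [x [i _ <-]|x Ax]; rewrite /e'.
  by case: (unlift ord_max i) => [j|] //; case: (eA j).
have [->|xa] := pselect (x = a); first by exists ord_max; rewrite ?unlift_none.
have [j _ <-] : range e x by rewrite rangee.
by exists (lift ord_max j); rewrite ?liftK.
Qed.

Lemma exists_natr_ge (R : archiRealDomainType) (K : R) :
  exists N : nat, K <= N%:R.
Proof.
exists (Num.bound `|K|); apply: ltW; apply: le_lt_trans (ler_norm K) _.
exact: archi_boundP.
Qed.

Section AsymptoticOrbits.
Variables (R : realType) (G : groupType) (T : Type) (act : G -> T -> T).
Variables (S : seq G) (d : T -> T -> R).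
Hypothesis hd : is_metric d.
Hypothesis hS : forall s, s \in S -> (s^-1)%g \in S.
Hypothesis hact : is_action act.
Hypothesis hc : forall g, mcontinuous d d (act g).

(* [warp_path x z m w]: [z] is reached from [x] by applying the letters of
   [w], the last one first, interleaved with [d]-jumps of total length at
   most [m]. *)
Fixpoint warp_path (x z : T) (m : R) (w : seq G) : Prop :=
  match w with
  | [::] => d x z <= m
  | s :: w' =>
      s \in S /\ exists u m0, warp_path x u m0 w' /\ d (act s u) z <= m - m0
  end.

Lemma warp_path_ge0 x z m w : warp_path x z m w -> 0 <= m.
Proof.
have d0 := proj1 hd.
elim: w z m => [|s w IH] z m /=; first exact: le_trans.
by move=> [_ [u [m0 [/IH h1 h2]]]]; have := d0 (act s u) z; lra.
Qed.

Lemma warp_path_letters x z m w :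
  warp_path x z m w -> all (fun s => s \in S) w.
Proof.
elim: w z m => [|s w IH] z m //= [sS [u [m0 [/IH wS _]]]].
by rewrite sS wS.
Qed.

Lemma warp_path_move x u v m w :
  warp_path x u m w -> warp_path x v (m + d u v) w.
Proof.
have [_ [_ [_ tr]]] := hd.
case: w => [|s w] /=.
  by move=> h; apply: le_trans (tr x u v) _; rewrite lerD2r.
move=> [sS [u' [m0 [p h]]]]; split => //; exists u', m0; split => //.
by have := tr (act s u') u v; lra.
Qed.

Lemma warp_path_cons x u m w s :
  s \in S -> warp_path x u m w -> warp_path x (act s u) m (s :: w).
Proof.
move=> sS p /=; split => //; exists u, m; split => //.
by rewrite subrr (proj2 (proj1 (proj2 hd) _ _)).
Qed.

Lemma warp_path_near_word x w e : 0 < e -> exists eta, 0 < eta /\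
  forall z m, warp_path x z m w -> m < eta -> d (act (word_prod w) x) z < e.
Proof.
have [d0 [_ [_ tr]]] := hd.
elim: w e => [|s w IH] e e0 /=.
  exists e; split => // z m h1 h2.
  by rewrite (proj1 hact); exact: le_lt_trans h1 h2.
have e20 : 0 < e / 2 by rewrite divr_gt0.
have [del [del0 Hdel]] := hc s (act (word_prod w) x) e20.
have [eta [eta0 Heta]] := IH del del0.
exists (Num.min eta (e / 2)); split; first by rewrite lt_min eta0.
move=> z m [_ [u [m0 [p h]]]]; rewrite lt_min => /andP [m1 m2].
have := warp_path_ge0 p; have := d0 (act s u) z => dz m00.
have /(Heta _ _ p) /Hdel near : m0 < eta by lra.
by rewrite (proj2 hact); apply: le_lt_trans (tr _ (act s u) _) _; lra.
Qed.

Fixpoint words_upto (n : nat) : seq (seq G) :=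
  if n is n'.+1 then [::] :: [seq s :: w | s <- S, w <- words_upto n']
  else [:: [::]].

Lemma words_upto_complete n w :
  all (fun s => s \in S) w -> (size w <= n)%N -> List.In w (words_upto n).
Proof.
move=> wS wn; apply: mem_In.
elim: n w wS wn => [|n IH] [|s w] //= /andP [sS wS] hs.
by rewrite in_cons /=; apply: (allpairs_f (fun s w => s :: w)) => //; exact: IH.
Qed.

Section CheapestPath.
Variables (t : R) (x : T).
Hypothesis t0 : 0 < t.

Definition path_costs z : set R :=
  [set c | exists m w, warp_path x z m w /\ c = t * m + (size w)%:R].

Definition path_cost z := inf (path_costs z).

Lemma path_costs_neq0 z : path_costs z !=set0.
Proof. by exists (t * d x z + 0), (d x z), [::]; split => /=. Qed.

Lemma path_costs_lb z : has_lbound (path_costs z).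
Proof.
exists 0 => _ [m [w [/warp_path_ge0 m0 ->]]].
by rewrite addr_ge0 ?ler0n // mulr_ge0 ?(ltW t0).
Qed.

Lemma path_cost_move u v : path_cost v <= path_cost u + t * d u v.
Proof.
rewrite -lerBlDr; apply: lb_le_inf; first exact: path_costs_neq0.
move=> _ [m [w [p ->]]]; rewrite lerBlDr.
apply: ge_inf; first exact: path_costs_lb.
by exists (m + d u v), w; split; [exact: warp_path_move | rewrite mulrDr addrAC].
Qed.

Lemma path_cost_gen u s : s \in S -> path_cost (act s u) <= path_cost u + 1.
Proof.
move=> sS; rewrite -lerBlDr; apply: lb_le_inf; first exact: path_costs_neq0.
move=> _ [m [w [p ->]]]; rewrite lerBlDr.
apply: ge_inf; first exact: path_costs_lb.
exists m, (s :: w); split; first exact: warp_path_cons.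
by rewrite /= -addn1 natrD addrA.
Qed.

Lemma path_cost_start : path_cost x <= 0.
Proof.
apply: ge_inf; first exact: path_costs_lb.
exists 0, [::]; rewrite mulr0 addr0; split => //=.
by rewrite (proj2 (proj1 (proj2 hd) _ _)).
Qed.

(* [path_cost] is [t d]-Lipschitz and moves by at most 1 along generators,
   so it fits under an admissible metric. *)
Definition path_cost_metric u v :=
  Num.max (Num.min (t * d u v) 1) `|path_cost u - path_cost v|.

Lemma path_cost_metric_admissible : warp_admissible act S d t path_cost_metric.
Proof.
have [[m0 [meq [msym mtr]]] [mle mgen]] := warp_admissible_min1 act S hd t0.
have dsym := proj1 (proj2 (proj2 hd)).
rewrite /path_cost_metric.
split; last split.
- split; first by move=> u v; rewrite le_max m0.
  split.
    move=> u v; split; last first.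
      by move=> ->; rewrite subrr normr0 (proj2 (meq v v)) // maxxx.
    move=> h; apply/meq; apply/eqP; rewrite eq_le m0 andbT.
    by rewrite -h le_max lexx.
  split; first by move=> u v; rewrite msym distrC.
  move=> u v w; rewrite ge_max; apply/andP; split.
    by apply: le_trans (mtr u v w) _; apply: lerD; rewrite le_max lexx.
  apply: le_trans (ler_distD (path_cost v) _ _) _.
  by apply: lerD; rewrite le_max lexx orbT.
- move=> u v; rewrite ge_max mle /= ler_norml.
  by have := path_cost_move u v; have := path_cost_move v u; rewrite dsym; lra.
- move=> u s sS; rewrite ge_max mgen //= ler_norml.
  have := path_cost_gen u sS; have := path_cost_gen (act s u) (hS sS).
  by rewrite -(proj2 hact) mulVg (proj1 hact); lra.
Qed.

Lemma path_cost_le_warped z : path_cost z <= warped_dist act S d t x z.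
Proof.
apply: le_trans (warped_dist_ge x z path_cost_metric_admissible).
rewrite le_max ler_normr opprB; have := path_cost_start; lra.
Qed.

End CheapestPath.

Lemma warped_dist_cheap_path t x z (K : R) : 0 < t ->
  warped_dist act S d t x z <= K ->
  exists m w, warp_path x z m w /\ t * m + (size w)%:R < K + 1.
Proof.
move=> t0 hK; apply: contrapT => np.
suff : K + 1 <= path_cost t x z by have := path_cost_le_warped x t0 z; lra.
apply: lb_le_inf; first exact: path_costs_neq0.
move=> _ [m [w [p ->]]]; rewrite leNgt; apply/negP => lt.
by apply: np; exists m, w.
Qed.

(* Taking [t] large forces the d-jumps of a cheap path to be tiny, so its
   endpoint is close to [word_prod w x] for one of finitely many short [w]. *)
Lemma warped_bounded_word (K : R) (N : nat) x (Z : set T) :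
  K + 1 <= N%:R -> mclosed d Z ->
  (forall t, 0 < t -> exists z, Z z /\ warped_dist act S d t x z <= K) ->
  exists w, List.In w (words_upto N) /\ Z (act (word_prod w) x).
Proof.
move=> KN cZ H; apply: contrapT => nex.
have [eta [eta0 Heta]] : exists eta : R, 0 < eta /\
    forall w, List.In w (words_upto N) ->
      forall z m, warp_path x z m w -> m < eta -> ~ Z z.
  apply: list_common_radius => [w e e' _ le h z m p lt|w wN].
    exact: h z m p (lt_le_trans lt le).
  have [e [e0 He]] := cZ _ (fun Zw => nex (ex_intro _ w (conj wN Zw))).
  have [eta [eta0 Heta]] := warp_path_near_word x w e0.
  by exists eta; split => // z m p /(Heta _ _ p) /He.
pose t := (`|K| + 1) / eta.
have t0 : 0 < t by rewrite divr_gt0 // ltr_wpDl.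
have [z [Zz /(warped_dist_cheap_path t0) [m [w [p lt]]]]] := H t t0.
have tm0 : 0 <= t * m by rewrite mulr_ge0 ?(warp_path_ge0 p) ?(ltW t0).
have wN : List.In w (words_upto N).
  apply: words_upto_complete (warp_path_letters p) _.
  by rewrite -(ler_nat R); apply: le_trans KN; lra.
apply: (Heta w wN z m p _ Zz).
have teta : t * eta = `|K| + 1 by rewrite /t divfK // gt_eqF.
rewrite -(ltr_pM2l t0) teta.
by have := ler_norm K; have := ler0n R (size w); lra.
Qed.

Lemma warped_bounded_point_word (K : R) (N : nat) x z :
  K + 1 <= N%:R -> (forall t, 0 < t -> warped_dist act S d t x z <= K) ->
  exists w, List.In w (words_upto N) /\ act (word_prod w) x = z.
Proof.
move=> KN H; apply: warped_bounded_word KN (mclosed_set1 (y := z) hd) _.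
by move=> t t0; exists z; split; last exact: H.
Qed.

Lemma warped_bounded_orbit (K : R) y y' :
  (forall t, 0 < t -> warped_dist act S d t y y' <= K) ->
  exists g, y' = act g y.
Proof.
move=> H; have [N hN] := exists_natr_ge (K + 1).
by have [w [_ <-]] := warped_bounded_point_word hN H; exists (word_prod w).
Qed.

End AsymptoticOrbits.

(** * Subgroups, orbit spaces and induced maps *)

Section Subgroups.
Variable G : groupType.

Definition is_subgroup (H : set G) : Prop :=
  [/\ H 1%g, forall a b, H a -> H b -> H (a * b)%g & forall a, H a -> H a^-1%g].

Definition lcoset (H : set G) a := [set (a * h)%g | h in H].

Lemma lcoset_eq (H : set G) a b : is_subgroup H ->
  lcoset H a = lcoset H b <-> H (b^-1 * a)%g.
Proof.
case=> H1 HM HV; split=> [E|Hba].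
  have [h Hh ah] : lcoset H b (a * 1)%g by rewrite -E; exists 1%g.
  by move: ah; rewrite mulg1 => <-; rewrite mulKg.
apply/seteqP; split=> _ [h Hh <-].
  by exists (b^-1 * a * h)%g; [exact: HM | rewrite !mulgA mulgV mul1g].
exists ((b^-1 * a)^-1 * h)%g; first by apply: HM => //; exact: HV.
by rewrite invgM invgK !mulgA mulgV mul1g.
Qed.

Lemma act_free_inj (T : Type) (act : G -> T -> T) x a b :
  is_action act -> free_orbit_at act x -> act a x = act b x -> a = b.
Proof.
move=> [act1 actM] free E.
have : act (b^-1 * a)%g x = x by rewrite actM E -actM mulVg act1.
by move=> /free /mulg1_eq; rewrite invgK.
Qed.

Lemma orbit_proj_eq (T : Type) (act : G -> T -> T) (F : set G) y y' :
  is_action act -> is_subgroup F ->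
  orbit_proj act F y = orbit_proj act F y' <-> exists2 g, F g & y' = act g y.
Proof.
move=> [act1 actM] [F1 FM FV]; split.
  move=> /(congr1 sval) /= E.
  have : [set act g y | g in F] y' by rewrite E; exists 1%g.
  by case=> g Fg <-; exists g.
case=> g Fg ->; apply: eq_exist; apply/seteqP; split=> _ [h Fh <-].
  exists (h * g^-1)%g; first by apply: FM => //; exact: FV.
  by rewrite actM -(actM g^-1%g) mulVg act1.
by exists (h * g)%g; [exact: FM | rewrite actM].
Qed.

End Subgroups.

Section GroupHom.
Variables (G H : groupType) (phi : G -> H).
Hypothesis hphi : group_hom phi.

Lemma group_hom1 : phi 1%g = 1%g.
Proof. by apply: (@mulgI _ (phi 1%g)); rewrite -hphi !mulg1. Qed.

Lemma group_homV g : phi g^-1%g = (phi g)^-1%g.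
Proof. by apply/esym/mulg1_eq; rewrite -hphi mulgV group_hom1. Qed.

Lemma kernel_subgroup : is_subgroup [set g | phi g = 1%g].
Proof.
split=> [|a b /= pa pb|a /= pa]; first exact: group_hom1.
  by rewrite hphi pa pb mulg1.
by rewrite group_homV pa invg1.
Qed.

End GroupHom.

Section InducedHomeomorphism.
Variables (R : realType) (Y X Q : Type) (dY : Y -> Y -> R) (dX : X -> X -> R).
Variables (f : Y -> X) (q : Y -> Q).
Hypotheses (hdX : is_metric dX) (hYc : mcompact dY) (hf : mcontinuous dY dX f).
Hypothesis q_surj : forall z, exists y, q y = z.
Hypothesis fq_fibers : forall y y', f y = f y' <-> q y = q y'.

Definition range_preim (x : {x | range f x}) : Y := projT1 (cid2 (proj2_sig x)).

Lemma range_preimK x : f (range_preim x) = proj1_sig x.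
Proof. by rewrite /range_preim; case: cid2. Qed.

Definition induced_map (x : {x | range f x}) : Q := q (range_preim x).

Lemma induced_mapE y x : proj1_sig x = f y -> induced_map x = q y.
Proof. by move=> E; apply/fq_fibers; rewrite range_preimK. Qed.

Lemma induced_map_bij : bijective induced_map.
Proof.
pose g z : {x | range f x} :=
  let y := projT1 (cid (q_surj z)) in exist _ (f y) (ex_intro2 _ _ y I erefl).
exists g => [[x px]|z]; rewrite /g; case: cid => y' /= qy'.
  apply: eq_exist; have [y _ fy] := px.
  by rewrite -fy; apply/fq_fibers; rewrite qy'; exact: induced_mapE.
by rewrite -qy'; exact: induced_mapE.
Qed.

(* Closed sets of [Y] are compact, so [f] maps them to closed sets: this is
   what makes [induced_map] continuous. *)
Lemma induced_map_homeo :
  homeomorphism (subspace_open (mopen dX) (range f))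
    (quotient_open (mopen dY) q) induced_map.
Proof.
split; first exact: induced_map_bij.
split=> [V oV|U [U' [oU' U'U]]].
  exists (~` (f @` ~` (q @^-1` V))); split.
    exact/mopenC/(mclosed_image hdX hYc hf)/(mclosedC oV).
  move=> x; have hx := induced_mapE (esym (range_preimK x)).
  rewrite /= hx; split=> [Vx [y nVy fy]|nx].
    by apply: nVy; rewrite -(induced_mapE (esym fy)) hx.
  apply: contrapT => nV; apply: nx.
  by exists (range_preim x); rewrite ?range_preimK.
rewrite /quotient_open.
suff -> : q @^-1` (induced_map @` U) = f @^-1` U'.
  exact: mopen_preimage hf oU'.
apply/seteqP; split=> y /= => [[x Ux qx]|U'y].
  have -> : f y = sval x.
    by rewrite -range_preimK; apply/fq_fibers; exact: esym qx.
  exact/U'U.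
exists (exist _ (f y) (ex_intro2 _ _ y I erefl)); first exact/U'U.
exact: induced_mapE.
Qed.

End InducedHomeomorphism.

Arguments induced_map {Y X Q} f q x.

(** * Translates of a clopen connected set *)

Section ClopenTranslates.
Variables (R : realType) (G : groupType) (X : Type) (d : X -> X -> R).
Variables (act : G -> X -> X) (K : set X).
Hypotheses (hact : is_action act) (hc : forall g, mcontinuous d d (act g)).

Definition translate a := act a @` K.

Definition stabilizer := [set a | translate a = K].

Lemma translateM a b : translate (a * b)%g = act a @` translate b.
Proof.
apply/seteqP; split=> _ [x Kx <-].
  by exists (act b x); [exists x | rewrite (proj2 hact)].
by case: Kx => y Ky <-; exists y; rewrite ?(proj2 hact).
Qed.

Lemma translate1 : translate 1%g = K.
Proof.
apply/seteqP; split=> [_ [x Kx <-]|x Kx]; first by rewrite (proj1 hact).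
by exists x; rewrite ?(proj1 hact).
Qed.

Lemma translate_preimage a : translate a = act a^-1%g @^-1` K.
Proof.
have act_inv b x : act b^-1%g (act b x) = x.
  by rewrite -(proj2 hact) mulVg (proj1 hact).
apply/seteqP; split=> [_ [x Kx <-]|x Kx] /=; first by rewrite act_inv.
by exists (act a^-1%g x); rewrite // -{1}(invgK a) act_inv.
Qed.

Lemma translate_eq a b : translate a = translate b <-> stabilizer (b^-1 * a)%g.
Proof.
rewrite /stabilizer /=; split=> E.
  by rewrite translateM E -translateM mulVg translate1.
by rewrite -[a](mulVKg b) translateM E.
Qed.

Lemma stabilizer_subgroup : is_subgroup stabilizer.
Proof.
split=> [|a b|a]; rewrite /stabilizer /=; first exact: translate1.
  by rewrite translateM => Ea ->.
by move=> Ea; rewrite -[in RHS]translate1 -(mulVg a) translateM Ea.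
Qed.

Lemma translate_mclosed a : mclosed d K -> mclosed d (translate a).
Proof. by rewrite translate_preimage; exact: mclosed_preimage. Qed.

Lemma translate_mopen a : mopen d K -> mopen d (translate a).
Proof. by rewrite translate_preimage; exact: mopen_preimage. Qed.

Lemma translate_connected a :
  mconnected_set d K -> mconnected_set d (translate a).
Proof. by move=> hK; exact: mconnected_image hK (hc a). Qed.

Hypotheses (K_closed : mclosed d K) (K_open : mopen d K).
Hypotheses (K_conn : mconnected_set d K) (K_nonempty : exists x, K x).

Lemma translate_meet a b x :
  translate a x -> translate b x -> translate a = translate b.
Proof.
move=> ax bx; apply/seteqP; split; apply: mconnected_clopen;
  by [exact: translate_connected | exact: translate_mopen
     | exact: translate_mclosed | exists x].
Qed.

Lemma translate_component a : mcomponent d (translate a).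
Proof.
have [x Kx] := K_nonempty.
split; first by exists (act a x); exists x.
split=> [|C' cC' sC']; first exact: translate_connected.
apply/seteqP; split=> //; apply: (mconnected_clopen (d := d)) => //;
  by [exact: translate_mopen | exact: translate_mclosed
     | exists (act a x); split; [apply: sC'|]; exists x].
Qed.

Variable L : list G.
Hypothesis translates_cover : forall x, exists a, List.In a L /\ translate a x.

Lemma component_translate C : mcomponent d C -> exists a, C = translate a.
Proof.
case=> [[x Cx] [cC maxC]]; have [a [_ ax]] := translates_cover x.
exists a; apply/esym/maxC; first exact: translate_connected.
apply: (mconnected_clopen (d := d)) => //;
  by [exact: translate_mopen | exact: translate_mclosed | exists x].
Qed.

Lemma components_transitive C C' : mcomponent d C -> mcomponent d C' ->
  exists a, act a @` C = C'.
Proof.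
move=> /component_translate [a ->] /component_translate [b ->].
by exists (b * a^-1)%g; rewrite -translateM mulgVK.
Qed.

Lemma coset_translate_eq a b :
  lcoset stabilizer a = lcoset stabilizer b <-> translate a = translate b.
Proof. by rewrite translate_eq; exact: lcoset_eq stabilizer_subgroup. Qed.

Definition coset_translate (c : set G) : set X :=
  [set x | exists2 a, c a & translate a x].

Lemma coset_translateE a : coset_translate (lcoset stabilizer a) = translate a.
Proof.
apply/seteqP; split=> [x [_ [h Sh <-]]|x ax].
  by rewrite translateM Sh -translate1 -translateM mulg1.
by exists a => //; exists 1%g; rewrite ?mulg1 //; case: stabilizer_subgroup.
Qed.

Lemma left_cosets_stabilizer_in c :
  left_cosets stabilizer c -> List.In c (map (lcoset stabilizer) L).
Proof.
case=> a _ <-.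
change (List.In (lcoset stabilizer a) (map (lcoset stabilizer) L)).
have [x Kx] := K_nonempty; have [b [bL bx]] := translates_cover (act a x).
have /coset_translate_eq -> : translate a = translate b.
  by apply: translate_meet bx; exists x.
exact: List.in_map.
Qed.

Lemma translates_card : exists n, has_card (left_cosets stabilizer) n /\
  has_card [set C | mcomponent d C] n.
Proof.
have [n [e [inje rangee]]] := has_card_of_list left_cosets_stabilizer_in.
have ecoset i : exists a, e i = lcoset stabilizer a.
  have [a _ <-] : left_cosets stabilizer (e i) by rewrite -rangee; exists i.
  by exists a.
exists n; split; first by exists e.
exists (coset_translate \o e); split.
  move=> i j /=; have [a ea] := ecoset i; have [b eb] := ecoset j.
  rewrite ea eb !coset_translateE => /coset_translate_eq E.
  by apply: inje; rewrite ea eb.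
apply/seteqP; split=> [_ [i _ <-]|C /component_translate [a ->]] /=.
  have [a ->] := ecoset i.
  by rewrite coset_translateE; exact: translate_component.
have [i _ ei] : range e (lcoset stabilizer a) by rewrite rangee; exists a.
by exists i; rewrite //= ei coset_translateE.
Qed.

End ClopenTranslates.

(** * Rigidity *)

Section WarpedConeRigidity.
Variable R : realType.
Variables (Gam Del : groupType) (SG : seq Gam) (SD : seq Del).
Variables (Y X : Type) (dY : Y -> Y -> R) (dX : X -> X -> R).
Variables (actY : Gam -> Y -> Y) (actX : Del -> X -> X) (f : Y -> X).
Hypotheses (hSG : sym_gen_set SG) (hSD : sym_gen_set SD).
Hypotheses (hdY : is_metric dY) (hdX : is_metric dX) (hYc : mcompact dY).
Hypothesis hYconn : mconnected dY.
Hypotheses (hactY : is_action actY) (hactX : is_action actX).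
Hypothesis hactYc : forall g, mcontinuous dY dY (actY g).
Hypothesis hactXc : forall g, mcontinuous dX dX (actX g).
Hypotheses (hfree : free_action actX) (hf : mcontinuous dY dX f).
Variables (y0 : Y) (C A : R).
Hypothesis hy0 : free_orbit_at actY y0.
(* The quasi-isometry of warped cones enters only through these three
   bounds, which hold uniformly in the scale. *)
Hypothesis coarse_lower : forall y y' (K : R),
  (forall tau, 0 < tau -> warped_dist actX SD dX tau (f y) (f y') <= K) ->
  forall t, 0 < t -> warped_dist actY SG dY t y y' <= C * (K + A).
Hypothesis coarse_gen : forall y s, s \in SG -> forall tau, 0 < tau ->
  warped_dist actX SD dX tau (f y) (f (actY s y)) <= C + A.
Hypothesis coarse_dense : forall x tau, 0 < tau ->
  exists y, warped_dist actX SD dX tau x (f y) <= A.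

Lemma actX_inj a b x : actX a x = actX b x -> a = b.
Proof. exact: act_free_inj hactX (@hfree x). Qed.

(* On each piece [Z w] the generator [s] is intertwined with [word_prod w];
   the pieces are finitely many, closed and disjoint, so by connectedness of
   [Y] one of them is all of [Y]. *)
Lemma generator_equivariant s : s \in SG ->
  exists a, forall y, f (actY s y) = actX a (f y).
Proof.
move=> sS; have [N hN] := exists_natr_ge (C + A + 1).
pose Z w := [set y | f (actY s y) = actX (word_prod w) (f y)].
have Zcov y : exists w, List.In w (words_upto SD N) /\ Z w y.
  have [w [wN hw]] := warped_bounded_point_word hdX (proj1 hSD) hactX hactXc
    hN (coarse_gen y sS).
  by exists w; split => //; exact: esym hw.
have Zclosed w : mclosed dY (Z w).
  apply: mclosed_eq hdX _ _; first exact: mcontinuous_comp (hactYc s) hf.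
  exact: mcontinuous_comp hf (hactXc _).
have Zdisj w w' y : Z w y -> Z w' y -> Z w = Z w'.
  by rewrite /Z /= => -> /actX_inj ->.
have [w [_ Zw]] := Zcov y0.
exists (word_prod w) => y.
have Zopen := mopen_closed_partition Zclosed Zcov Zdisj.
by apply: (mconnected_clopen hYconn (Zopen w) (Zclosed w)) => //; exists y0.
Qed.

Lemma equivariant_exists g : exists a, forall y, f (actY g y) = actX a (f y).
Proof.
have [w [wS ->]] := proj2 hSG g.
elim: w wS => [_|s w IH /andP [sS /IH [a Ha]]] /=.
  by exists 1%g => y; rewrite (proj1 hactY) (proj1 hactX).
have [b Hb] := generator_equivariant sS.
by exists (b * a)%g => y; rewrite !(proj2 hactY) (proj2 hactX) Hb Ha.
Qed.

Definition phi g : Del := projT1 (cid (equivariant_exists g)).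

Lemma phiP g y : f (actY g y) = actX (phi g) (f y).
Proof. by rewrite /phi; case: cid. Qed.

Lemma phi_hom : group_hom phi.
Proof.
move=> a b; apply: (actX_inj (x := f y0)).
by rewrite -phiP (proj2 hactY) !phiP (proj2 hactX).
Qed.

Lemma equivariant_lift y y' a : actX a (f y) = f y' ->
  exists g, y' = actY g y /\ a = phi g.
Proof.
move=> E; have [K HK] := warped_dist_act_bounded hdX hactX a hSD.
have [g yg] : exists g, y' = actY g y.
  apply: (warped_bounded_orbit hdY (proj1 hSG) hactY hactYc (K := C * (K + A))).
  by apply: coarse_lower => tau t0; rewrite -E; exact: HK.
by exists g; split => //; apply: (actX_inj (x := f y)); rewrite -phiP -yg.
Qed.

Definition kernel := [set g | phi g = 1%g].

Lemma kernel_finite : exists n, has_card kernel n.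
Proof.
have [N hN] := exists_natr_ge (C * (0 + A) + 1).
apply: (has_card_of_list (l := [seq word_prod w | w <- words_upto SG N])).
move=> g kg.
have fg : f y0 = f (actY g y0) by rewrite phiP kg (proj1 hactX).
have near t : 0 < t -> warped_dist actY SG dY t y0 (actY g y0) <= C * (0 + A).
  by apply: coarse_lower => tau t0; rewrite -fg warped_dist_refl.
have [w [wN hw]] :=
  warped_bounded_point_word hdY (proj1 hSG) hactY hactYc hN near.
by rewrite -(act_free_inj hactY hy0 hw); exact: List.in_map.
Qed.

Lemma f_fibers y y' :
  f y = f y' <-> orbit_proj actY kernel y = orbit_proj actY kernel y'.
Proof.
rewrite orbit_proj_eq //; last exact: kernel_subgroup phi_hom.
split=> [fy|[g kg ->]]; last by rewrite phiP kg (proj1 hactX).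
have [|g [-> g1]] := equivariant_lift (a := 1%g) (y := y) (y' := y').
  by rewrite (proj1 hactX).
by exists g.
Qed.

Lemma orbit_proj_surj (z : orbit_space actY kernel) :
  exists y, orbit_proj actY kernel y = z.
Proof. by case: z => S [y E]; exists y; exact: eq_exist (esym E). Qed.

Lemma stabilizer_range_phi : stabilizer actX (range f) = range phi.
Proof.
apply/seteqP; split=> [a Sa|_ [g _ <-]].
  have : translate actX (range f) a (actX a (f y0)).
    by exists (f y0) => //; exists y0.
  rewrite Sa => -[y _ E].
  by have [g [_ ->]] := equivariant_lift (esym E); exists g.
rewrite /stabilizer /translate /=.
apply/seteqP; split=> [_ [_ [y _ <-] <-]|_ [y _ <-]].
  by rewrite -phiP; exists (actY g y).
exists (f (actY g^-1%g y)); first by exists (actY g^-1%g y).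
by rewrite -phiP -(proj2 hactY) mulgV (proj1 hactY).
Qed.

Lemma range_f_closed : mclosed dX (range f).
Proof. by apply: mclosed_image hdX hYc hf _ => p []. Qed.

Lemma range_f_translates_cover :
  exists L : seq Del,
    forall x, exists a, List.In a L /\ translate actX (range f) a x.
Proof.
have [N hN] := exists_natr_ge (A + 1).
exists [seq (word_prod w)^-1%g | w <- words_upto SD N] => x.
have near tau : 0 < tau ->
    exists z, range f z /\ warped_dist actX SD dX tau x z <= A.
  by move=> /(coarse_dense x) [y hy]; exists (f y); split => //; exists y.
have [w [wN [y _ fy]]] :=
  warped_bounded_word hdX (proj1 hSD) hactX hactXc hN range_f_closed near.
exists (word_prod w)^-1%g; split.
  exact: (List.in_map (fun w => (word_prod w)^-1%g)).
by exists (f y); [exists y | rewrite fy -(proj2 hactX) mulVg (proj1 hactX)].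
Qed.

(* [range f] is not yet known to be open, so overlapping translates are
   identified by lifting rather than by connectedness. *)
Lemma range_f_translate_meet a b x :
  translate actX (range f) a x -> translate actX (range f) b x ->
  translate actX (range f) a = translate actX (range f) b.
Proof.
move=> [_ [y _ <-] <-] [_ [y' _ <-] E].
apply/translate_eq => //; rewrite stabilizer_range_phi.
have [|g [_ ->]] := equivariant_lift (y := y) (y' := y') (a := (b^-1 * a)%g).
  by rewrite (proj2 hactX) -E -(proj2 hactX) mulVg (proj1 hactX).
by exists g.
Qed.

Lemma range_f_open : mopen dX (range f).
Proof.
have [L cover] := range_f_translates_cover.
have closed a : mclosed dX (translate actX (range f) a).
  exact: translate_mclosed hactX hactXc a range_f_closed.
rewrite -(translate1 (range f) hactX).
exact: mopen_closed_partition closed cover range_f_translate_meet 1%g.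
Qed.

Lemma homeomorphism_conjugacy : mhomeomorphism dY dX f ->
  exists psi : Gam -> Del, bijective psi /\ group_hom psi /\
    forall g y, f (actY g y) = actX (psi g) (f y).
Proof.
move=> [k [fK [kK _]]].
have phi_inj : injective phi.
  move=> a b E; apply: (act_free_inj hactY hy0); apply: (can_inj fK).
  by rewrite !phiP E.
have phi_surj a : exists g, phi g = a.
  have rangeT : range f = setT by apply/seteqP; split=> // x _; exists (k x).
  have : stabilizer actX (range f) a.
    rewrite /stabilizer /translate /= rangeT; apply/seteqP; split=> // x _.
    by exists (actX a^-1%g x); rewrite // -(proj2 hactX) mulgV (proj1 hactX).
  by rewrite stabilizer_range_phi => -[g _ <-]; exists g.
exists phi; split; last by split; [exact: phi_hom | exact: phiP].
exists (fun a => projT1 (cid (phi_surj a))) => [g|a]; last by case: cid.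
by apply: phi_inj; case: cid.
Qed.

Lemma warped_cone_rigidity :
  let Del' := [set d : Del | actX d @` range f = range f] in
  [/\ (exists n, has_card (left_cosets Del') n),
      exists phi : Gam -> Del,
        let F := [set g : Gam | phi g = 1%g] in
        [/\ group_hom phi, range phi = Del', (exists n, has_card F n) &
          exists h : {x : X | range f x} -> orbit_space actY F,
            [/\ homeomorphism (subspace_open (mopen dX) (range f))
                   (quotient_open (mopen dY) (orbit_proj actY F)) h,
                (forall y (x : {x : X | range f x}),
                   proj1_sig x = f y -> h x = orbit_proj actY F y) &
                (forall g y (x : {x : X | range f x}),
                   proj1_sig x = actX (phi g) (f y) ->
                   h x = orbit_proj actY F (actY g y))]],
      [/\ mcomponent dX (range f),
          (exists n, has_card (left_cosets Del') n /\
                     has_card [set C | mcomponent dX C] n) &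
          (forall C C', mcomponent dX C -> mcomponent dX C' ->
             exists d, actX d @` C = C')] &
      (mhomeomorphism dY dX f ->
         exists psi : Gam -> Del, bijective psi /\ group_hom psi /\
           forall g y, f (actY g y) = actX (psi g) (f y))].
Proof.
have [L cover] := range_f_translates_cover.
have conn : mconnected_set dX (range f) := mconnected_image hYconn hf.
have nonempty : exists x, range f x by exists (f y0); exists y0.
have card := translates_card hactX hactXc range_f_closed range_f_open conn
  nonempty cover.
split.
- by have [n [cosets _]] := card; exists n.
- exists phi; split.
  + exact: phi_hom.
  + by rewrite -stabilizer_range_phi.
  + exact: kernel_finite.
  + exists (induced_map f (orbit_proj actY kernel)); split.
    * exact: induced_map_homeo hdX hYc hf orbit_proj_surj f_fibers.
    * by move=> y x /(induced_mapE f_fibers).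
    * by move=> g y x; rewrite -phiP => /(induced_mapE f_fibers).
- split.
  + rewrite -(translate1 (range f) hactX).
    exact: translate_component hactX hactXc range_f_closed range_f_open conn
      nonempty 1%g.
  + exact: card.
  + move=> D D' hD hD'.
    exact (components_transitive hactX hactXc range_f_closed range_f_open conn
      cover hD hD').
- exact: homeomorphism_conjugacy.
Qed.

End WarpedConeRigidity.

Section CoarseBounds.
Variables (R : realType) (Gam Del : groupType) (SG : seq Gam) (SD : seq Del).
Variables (Y X : Type) (dY : Y -> Y -> R) (dX : X -> X -> R).
Variables (actY : Gam -> Y -> Y) (actX : Del -> X -> X) (f : Y -> X).
Variables (I : Type) (t tau : I -> R) (C A : R).
Hypothesis t_tau_pos : forall i, 0 < t i /\ 0 < tau i.
Hypothesis t_onto : forall r, 0 < r -> exists i, t i = r.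
Hypothesis tau_onto : forall r, 0 < r -> exists i, tau i = r.
Hypothesis C_pos : 0 < C.

Lemma coarse_lower_uniform :
  (forall i y y', C^-1 * warped_dist actY SG dY (t i) y y' - A
                   <= warped_dist actX SD dX (tau i) (f y) (f y')) ->
  forall y y' (K : R),
    (forall r, 0 < r -> warped_dist actX SD dX r (f y) (f y') <= K) ->
    forall r, 0 < r -> warped_dist actY SG dY r y y' <= C * (K + A).
Proof.
move=> lower y y' K HK _ /t_onto [i <-].
have := le_trans (lower i y y') (HK _ (proj2 (t_tau_pos i))).
by rewrite -ler_pdivrMl // lerBlDr.
Qed.

Lemma coarse_gen_uniform : is_metric dY ->
  (forall i y y', warped_dist actX SD dX (tau i) (f y) (f y')
                   <= C * warped_dist actY SG dY (t i) y y' + A) ->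
  forall y s, s \in SG -> forall r, 0 < r ->
    warped_dist actX SD dX r (f y) (f (actY s y)) <= C + A.
Proof.
move=> hdY upper y s sS _ /tau_onto [i <-].
apply: le_trans (upper i y (actY s y)) _; rewrite lerD2r ger_pMr //.
exact (warped_dist_gen actY hdY y (proj1 (t_tau_pos i)) sS).
Qed.

Lemma coarse_dense_uniform :
  (forall i x, exists y, warped_dist actX SD dX (tau i) x (f y) <= A) ->
  forall x r, 0 < r -> exists y, warped_dist actX SD dX r x (f y) <= A.
Proof. by move=> dense x _ /tau_onto [i <-]; exact: dense. Qed.

End CoarseBounds.

Theorem theorem4p1 (R : realType)
  (Gam Del : groupType) (SG : seq Gam) (SD : seq Del)
  (Y X : Type) (dY : Y -> Y -> R) (dX : X -> X -> R)
  (actY : Gam -> Y -> Y) (actX : Del -> X -> X) (f : Y -> X)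
  (hSG : sym_gen_set SG) (hSD : sym_gen_set SD)
  (hdY : is_metric dY) (hdX : is_metric dX)
  (hYc : mcompact dY) (hXc : mcompact dX) (hYconn : mconnected dY)
  (hactY : is_action actY) (hactX : is_action actX)
  (hactYc : forall g, mcontinuous dY dY (actY g))
  (hactXc : forall g, mcontinuous dX dX (actX g))
  (hfreeorb : exists y, free_orbit_at actY y)
  (hfree : free_action actX)
  (hf : mcontinuous dY dX f)
  (hQI : exists (I : Type) (t tau : I -> R) (C A : R),
     (forall i, 0 < t i /\ 0 < tau i) /\
     (forall r : R, 0 < r -> exists i, t i = r) /\
     (forall r : R, 0 < r -> exists i, tau i = r) /\
     1 <= C /\ 0 <= A /\
     forall i,
       (forall y y',
          C^-1 * warped_dist actY SG dY (t i) y y' - A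
            <= warped_dist actX SD dX (tau i) (f y) (f y') /\
          warped_dist actX SD dX (tau i) (f y) (f y')
            <= C * warped_dist actY SG dY (t i) y y' + A) /\
       (forall x, exists y, warped_dist actX SD dX (tau i) x (f y) <= A)) :
  let Del' := [set d : Del | actX d @` range f = range f] in
  [/\ (* (1) *)
      (exists n, has_card (left_cosets Del') n),
      (* (1) and (2) *)
      exists phi : Gam -> Del,
        let F := [set g : Gam | phi g = 1%g] in
        [/\ group_hom phi, range phi = Del', (exists n, has_card F n) &
          exists h : {x : X | range f x} -> orbit_space actY F,
            [/\ homeomorphism (subspace_open (mopen dX) (range f))
                   (quotient_open (mopen dY) (orbit_proj actY F)) h,
                (forall y (x : {x : X | range f x}),
                   proj1_sig x = f y -> h x = orbit_proj actY F y) &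
                (forall g y (x : {x : X | range f x}),
                   proj1_sig x = actX (phi g) (f y) ->
                   h x = orbit_proj actY F (actY g y))]],
      (* (3) *)
      [/\ mcomponent dX (range f),
          (exists n, has_card (left_cosets Del') n /\
                     has_card [set C | mcomponent dX C] n) &
          (forall C C', mcomponent dX C -> mcomponent dX C' ->
             exists d, actX d @` C = C')] &
      (* in particular *)
      (mhomeomorphism dY dX f ->
         exists psi : Gam -> Del, bijective psi /\ group_hom psi /\
           forall g y, f (actY g y) = actX (psi g) (f y))].
Proof.
have [y0 hy0] := hfreeorb.
case: hQI => I [t [tau [C [A [hpos [ht [htau [hC [_ hq]]]]]]]]].
have C0 : 0 < C := lt_le_trans ltr01 hC.
have lower i y y' := proj1 (proj1 (hq i) y y').
have upper i y y' := proj2 (proj1 (hq i) y y').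
exact (warped_cone_rigidity hSG hSD hdY hdX hYc hYconn hactY hactX hactYc hactXc
  hfree hf hy0 (coarse_lower_uniform hpos ht C0 lower)
  (coarse_gen_uniform hpos htau C0 hdY upper)
  (coarse_dense_uniform htau (fun i => proj2 (hq i)))).
Qed.
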